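(* Let $N\ge1$, $K\ge1$, $n_v\ge0$, let $\mathbf{T}\in[0,1]^{K\times K}$ be row-stochastic, and let $\mathbf{P}\in[0,1]^{K^N\times K^N}$ be the global transition matrix given by $\mathbf{P}(x,y)=\prod_{n=1}^N \frac{1}{|V_n|}\sum_{i\in V_n}\mathbf{T}_{x_i,y_n}$ for $x,y\in[K]^N$. Then $\mathbf{P}$ is irreducible and aperiodic if and only if $\mathbf{T}$ is irreducible and aperiodic.
   Context: Vertices $[N]=\{1,\dots,N\}$ are arranged on a cycle; for $n\in[N]$, $V_n\subset[N]$ is the set of residues modulo $N$ of $n-n_v,\dots,n+n_v$ (so $n\in V_n$), and $|V_n|$ its cardinality. $\mathbf{P}$ is the transition matrix of the probabilistic cellular automaton with local transition matrix $\mathbf{T}$. *)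

From HB Require Import structures.
From mathcomp Require Import all_boot all_order all_algebra.
Set Implicit Arguments. Unset Strict Implicit. Unset Printing Implicit Defensive.
Import Order.TTheory GRing.Theory Num.Theory.
Local Open Scope ring_scope.

Section FinMx.
Variables (R : realFieldType) (S : finType).

Fixpoint mpow (M : S -> S -> R) (m : nat) : S -> S -> R :=
  match m with
  | 0 => fun i j => (i == j)%:R
  | m'.+1 => fun i j => \sum_(k : S) mpow M m' i k * M k j
  end.

Definition row_stochastic (M : S -> S -> R) : Prop :=
  (forall i j, 0 <= M i j <= 1) /\ (forall i, \sum_(j : S) M i j = 1).

Definition irreducible (M : S -> S -> R) : Prop :=
  forall i j, exists m : nat, 0 < mpow M m i j.

(* aperiodic: every state has period 1, i.e. the gcd of
   {m >= 1 : M^m(i,i) > 0} equals 1 (the only common divisor is 1). *)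
Definition aperiodic (M : S -> S -> R) : Prop :=
  forall i, forall d : nat,
    (forall m : nat, (0 < m)%N -> 0 < mpow M m i i -> (d %| m)%N) -> d = 1%N.
End FinMx.

(* Neighbourhood V_n on the cycle 'I_N (vertices 0..N-1 stand for 1..N):
   residues mod N of n - nv, ..., n + nv.  Since (N-1)*nv = -nv mod N,
   n - nv + j is written n + j + (N-1)*nv to avoid truncated subtraction. *)
Definition nbhd (N nv : nat) (n : 'I_N) : {set 'I_N} :=
  [set i : 'I_N | [exists j : 'I_(2 * nv).+1,
                    (i : nat) == ((n + j + N.-1 * nv) %% N)%N]].

Arguments nbhd : clear implicits.
Definition pca (R : realFieldType) (N K nv : nat) (T : 'I_K -> 'I_K -> R)
  (x y : {ffun 'I_N -> 'I_K}) : R :=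
  \prod_(n : 'I_N)
     ((#|nbhd N nv n|%:R)^-1 * \sum_(i in nbhd N nv n) T (x i) (y n)).
Arguments pca {R} N {K} nv T x y.

(* A nonnegative matrix is irreducible and aperiodic iff it is primitive,
   i.e. all its large enough powers are entrywise positive: the return times
   to a state form an additive semigroup whose elements have no common divisor
   but 1, and such a semigroup contains two consecutive integers b, b + 1,
   hence every integer >= b * b.
   For the cellular automaton, P^m(x, y) > 0 as soon as T^m(x_n, y_n) > 0 at
   every site n (each site may copy its own letter, as n \in V_n), and
   P^m(x, y) > 0 forces T^m(x_i, y_n) > 0 for some i at every site n.  Taking
   x and y constant shows that P is primitive iff T is. *)
From HB Require Import structures.
From mathcomp Require Import all_boot all_order all_algebra.
From mathcomp Require Import zify.
From Stdlib Require Import Classical.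
Set Implicit Arguments. Unset Strict Implicit. Unset Printing Implicit Defensive.
Import Order.TTheory GRing.Theory Num.Theory.

Section NumericalSemigroup.
Variable A : nat -> Prop.
Hypotheses (A0 : A 0) (AD : forall a b, A a -> A b -> A (a + b)).

Lemma semigroupMn k a : A a -> A (k * a).
Proof. by move=> Aa; elim: k => [|k IHk]; rewrite ?mul0n // mulSn; apply: AD. Qed.

Let has_gap d := exists b, A b /\ A (b + d).

(* With s = q d + r, both q (b + d) and q (b + d) + r = q b + s lie in A. *)
Lemma has_gap_mod d s : has_gap d -> A s -> has_gap (s %% d).
Proof.
move=> [b [Ab Abd]] As; exists (s %/ d * (b + d)); split; first exact: semigroupMn.
by rewrite mulnDr -addnA -divn_eq; apply: AD => //; apply: semigroupMn.
Qed.

Lemma has_gap_common_divisor d :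
  0 < d -> has_gap d -> exists2 g, has_gap g & forall m, A m -> g %| m.
Proof.
elim/ltn_ind: d => d IHd d_gt0 gap_d.
have [dvd_d|] := classic (forall m, A m -> d %| m); first by exists d.
move=> /not_all_ex_not [s] /(imply_to_and (A s)) [As ndvd_ds].
apply: (IHd (s %% d)); first by rewrite ltn_pmod.
  by rewrite lt0n; apply/negP.
exact: has_gap_mod.
Qed.

Lemma has_gap1_eventually : has_gap 1 -> exists L, forall m, L <= m -> A m.
Proof.
move=> [b [Ab Ab1]].
have [b0|b_gt0] := posnP b.
  by exists 0 => m _; rewrite -(muln1 m); apply: semigroupMn; rewrite b0 in Ab1.
exists (b * b) => m le_bb_m.
have := ltn_pmod m b_gt0; have := divn_eq m b.
move: (m %/ b) (m %% b) => q r m_eq r_lt_b.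
have -> : m = (q - r) * b + r * (b + 1) by nia.
by apply: AD; apply: semigroupMn.
Qed.

Lemma semigroup_eventually :
  (forall d, (forall m, 0 < m -> A m -> d %| m) -> d = 1) ->
  exists L, forall m, L <= m -> A m.
Proof.
move=> coprime_A.
have [s s_gt0 As] : exists2 s, 0 < s & A s.
  apply: NNPP => noA; suff : 2 = 1 by [].
  by apply: coprime_A => m m_gt0 Am; case: noA; exists m.
have gap_s : has_gap s by exists 0; rewrite add0n.
have [g gap_g dvd_g] := has_gap_common_divisor s_gt0 gap_s.
apply: has_gap1_eventually; rewrite -(coprime_A g) // => m _; exact: dvd_g.
Qed.

End NumericalSemigroup.

Lemma eventually_forall_fin (X : finType) (Q : X -> nat -> Prop) :
  (forall x, exists L, forall m, L <= m -> Q x m) ->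
  exists L, forall x m, L <= m -> Q x m.
Proof.
move=> /fin_all_exists [L QL]; exists (\max_x L x) => x m le_max_m.
by apply: QL; apply: leq_trans le_max_m; apply: leq_bigmax.
Qed.

Local Open Scope ring_scope.

Lemma psumr_gt0P (R : numDomainType) (I : finType) (P : pred I) (F : I -> R) :
  (forall i, P i -> 0 <= F i) ->
  reflect (exists2 i, P i & 0 < F i) (0 < \sum_(i | P i) F i).
Proof.
move=> F_ge0; rewrite lt_def sumr_ge0 // andbT psumr_neq0 //.
apply: (iffP hasP) => [[i _ /andP [Pi Fi_gt0]]|[i Pi Fi_gt0]]; first by exists i.
by exists i; rewrite ?mem_index_enum ?Pi.
Qed.

Section NonnegativeMatrix.
Variables (R : realFieldType) (S : finType) (M : S -> S -> R).
Hypothesis M_ge0 : forall i j, 0 <= M i j.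

Definition primitive := exists L, forall m i j, (L <= m)%N -> 0 < mpow M m i j.

Lemma mpow_ge0 m i j : 0 <= mpow M m i j.
Proof.
elim: m i j => [|m IHm] i j /=; first by rewrite ler0n.
by apply: sumr_ge0 => k _; apply: mulr_ge0.
Qed.

Lemma mpow0_gt0 i j : (0 < mpow M 0 i j) = (i == j).
Proof. by rewrite /=; case: eqP; rewrite ?ltr01 ?ltxx. Qed.

Lemma mpowS_gt0P m i j :
  reflect (exists2 k, 0 < mpow M m i k & 0 < M k j) (0 < mpow M m.+1 i j).
Proof.
have terms_ge0 k : predT k -> 0 <= mpow M m i k * M k j.
  by move=> _; apply: mulr_ge0 (mpow_ge0 _ _ _) (M_ge0 _ _).
apply: (iffP (psumr_gt0P terms_ge0)) => [[k _]|[k mk kj]]; last by exists k => //; apply: mulr_gt0.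
by rewrite mulr_ge0_gt0 ?mpow_ge0 // => /andP [mk kj]; exists k.
Qed.

Lemma mpowD_gt0 a b i j k :
  0 < mpow M a i j -> 0 < mpow M b j k -> 0 < mpow M (a + b) i k.
Proof.
elim: b k => [|b IHb] k ij jk; first by rewrite addn0 -(eqP (_ : j == k)) -?mpow0_gt0.
rewrite addnS; have [l jl lk] := mpowS_gt0P _ _ _ jk.
by apply/mpowS_gt0P; exists l; first exact: IHb.
Qed.

Lemma irreducible_aperiodic_primitive : irreducible M -> aperiodic M -> primitive.
Proof.
move=> irrM apM.
have /eventually_forall_fin [L posL] :
  forall ij : S * S, exists L, forall m, (L <= m)%N -> 0 < mpow M m ij.1 ij.2.
  move=> [i j]; have [p ij_p] := irrM i j.
  have ii_0 : 0 < mpow M 0 i i by rewrite mpow0_gt0.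
  have [L ii_L] := semigroup_eventually ii_0 (fun a b => @mpowD_gt0 a b i i i) (apM i).
  exists (L + p)%N => m le_Lp_m; rewrite -(subnK (_ : p <= m)%N); last by lia.
  by apply: mpowD_gt0 ij_p; apply: ii_L; lia.
by exists L => m i j /(posL (i, j)).
Qed.

Lemma primitive_irreducible : primitive -> irreducible M.
Proof. by move=> [L posL] i j; exists L; apply: posL. Qed.

Lemma primitive_aperiodic : primitive -> aperiodic M.
Proof.
move=> [L posL] i d dvd_d.
have dvd_d_L k : (d %| L.+1 + k)%N by apply: dvd_d; [lia | apply: posL; lia].
apply/eqP; rewrite -dvdn1.
by rewrite -(dvdn_addr 1%N (dvd_d_L 0%N)) addn0 dvd_d_L.
Qed.

Lemma primitiveP : irreducible M /\ aperiodic M <-> primitive.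
Proof.
split=> [[]|prM]; first exact: irreducible_aperiodic_primitive.
by split; [apply: primitive_irreducible | apply: primitive_aperiodic].
Qed.

End NonnegativeMatrix.

Section CellularAutomaton.
Variables (R : realFieldType) (N K nv : nat) (T : 'I_K -> 'I_K -> R).
Hypothesis T_ge0 : forall i j, 0 <= T i j.
Local Notation P := (pca N nv T).
Implicit Types x y : {ffun 'I_N -> 'I_K}.

Lemma nbhd_self n : n \in nbhd N nv n.
Proof.
have nv_lt : (nv < (2 * nv).+1)%N by lia.
rewrite inE; apply/existsP; exists (Ordinal nv_lt) => /=.
have N_gt0 : (0 < N)%N by apply: leq_ltn_trans (ltn_ord n).
have -> : (n + nv + N.-1 * nv = nv * N + n)%N by rewrite -addnA -mulSn prednK // mulnC addnC.
by rewrite modnMDl modn_small.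
Qed.

Lemma pca_ge0 x y : 0 <= P x y.
Proof.
apply: prodr_ge0 => n _; apply: mulr_ge0; first by rewrite invr_ge0 ler0n.
exact: sumr_ge0.
Qed.

Lemma pca_gt0P x y :
  reflect (forall n, exists2 i, i \in nbhd N nv n & 0 < T (x i) (y n)) (0 < P x y).
Proof.
have card_gt0 n : 0 < (#|nbhd N nv n|%:R)^-1 :> R.
  by rewrite invr_gt0 ltr0n card_gt0; apply/set0Pn; exists n; apply: nbhd_self.
have site_gt0P n : reflect (exists2 i, i \in nbhd N nv n & 0 < T (x i) (y n))
    (0 < (#|nbhd N nv n|%:R)^-1 * \sum_(i in nbhd N nv n) T (x i) (y n)).
  by rewrite pmulr_rgt0 //; apply: psumr_gt0P.
rewrite lt_def pca_ge0 andbT /pca; apply: (iffP (prodf_neq0 _ _)) => [site_neq0 n|sites n _].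
  apply/site_gt0P; rewrite lt_def site_neq0 //.
  by rewrite mulr_ge0 ?invr_ge0 ?ler0n ?sumr_ge0.
by rewrite gt_eqF //; apply/site_gt0P.
Qed.

Lemma mpow_pca_gt0 m x y :
  (forall n, 0 < mpow T m (x n) (y n)) -> 0 < mpow P m x y.
Proof.
elim: m x y => [|m IHm] x y xy.
  by rewrite mpow0_gt0; apply/eqP/ffunP => n; apply/eqP; rewrite -(mpow0_gt0 T).
have /fin_all_exists [z xz_zy] :
    forall n, exists z, 0 < mpow T m (x n) z /\ 0 < T z (y n).
  by move=> n; have /(mpowS_gt0P T_ge0) [z xz zy] := xy n; exists z.
apply/(mpowS_gt0P pca_ge0).
exists [ffun n => z n]; first by apply: IHm => n; rewrite ffunE; case: (xz_zy n).
by apply/pca_gt0P => n; exists n; rewrite ?nbhd_self ?ffunE; case: (xz_zy n).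
Qed.

Lemma mpow_pca_gt0_site m x y n :
  0 < mpow P m x y -> exists i, 0 < mpow T m (x i) (y n).
Proof.
elim: m y n => [|m IHm] y n.
  by rewrite mpow0_gt0 => /eqP ->; exists n; rewrite mpow0_gt0.
move=> /(mpowS_gt0P pca_ge0) [z xz /pca_gt0P /(_ n) [i _ zy]].
have [k xk] := IHm _ i xz; exists k.
by apply/(mpowS_gt0P T_ge0); exists (z i).
Qed.

Lemma primitive_pca : (0 < N)%N -> primitive P <-> primitive T.
Proof.
move=> N_gt0; split=> [[L posL]|[L posL]]; exists L => m i j le_Lm.
  have [k] := mpow_pca_gt0_site (Ordinal N_gt0) (posL m [ffun=> i] [ffun=> j] le_Lm).
  by rewrite !ffunE.
by apply: mpow_pca_gt0 => n; apply: posL.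
Qed.

End CellularAutomaton.

Theorem proposition2p9 (R : realFieldType) (N K nv : nat)
  (hN : (1 <= N)%N) (hK : (1 <= K)%N) (T : 'I_K -> 'I_K -> R) :
  row_stochastic T ->
  (irreducible (pca N nv T) /\ aperiodic (pca N nv T) <->
   irreducible T /\ aperiodic T).
Proof.
move=> [T_bounds _].
have T_ge0 i j : 0 <= T i j by case/andP: (T_bounds i j).
rewrite (primitiveP (pca_ge0 (N:=N) nv T_ge0)) (primitiveP T_ge0).
exact: primitive_pca.
Qed.
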